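(* Let $\Bbbk$ be a field of characteristic $0$, $n\ge3$, and let $(A,\mu,(\alpha_1,\ldots,\alpha_{n-1}))$ be an $n$-ary totally Hom-associative algebra over $\Bbbk$, with $\mu(x_1,\ldots,x_n)=(x_1\cdots x_n)$. Suppose $a\in A$ satisfies (1) $\alpha_{n-1}(a)=a$, and (2) $(x_1,\ldots,x_{n-1},a)=(x_1,\ldots,x_{n-2},a,x_{n-1})$ for all $x_i\in A$. Define the $(n-1)$-ary product $(x_1,\ldots,x_{n-1})'=(x_1,\ldots,x_{n-1},a)$. Then $A_1=(A,(\cdot)',(\alpha_1,\ldots,\alpha_{n-2}))$ is an $(n-1)$-ary totally Hom-associative algebra. Moreover, if $A$ is multiplicative, then so is $A_1$.
   Context: An $m$-ary Hom-algebra $(V,\mu,(\alpha_1,\ldots,\alpha_{m-1}))$ is a vector space $V$ with an $m$-linear map $\mu$ (written $\mu(a_1,\ldots,a_m)=(a_1\cdots a_m)$) and linear maps $\alpha_i\colon V\to V$. It is multiplicative if all $\alpha_i$ equal one map $\alpha$ and $\alpha\circ\mu=\mu\circ\alpha^{\otimes m}$. It is $m$-ary totally Hom-associative if for every $i\in\{1,\ldots,m-1\}$ and all $a_1,\ldots,a_{2m-1}$: $(\alpha_1(a_1),\ldots,\alpha_{i-1}(a_{i-1}),(a_i\cdots a_{i+m-1}),\alpha_i(a_{i+m}),\ldots,\alpha_{m-1}(a_{2m-1}))=(\alpha_1(a_1),\ldots,\alpha_i(a_i),(a_{i+1}\cdots a_{i+m}),\alpha_{i+1}(a_{i+m+1}),\ldots,\alpha_{m-1}(a_{2m-1}))$.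 *)

From HB Require Import structures.
From mathcomp Require Import all_boot all_order all_algebra.
Set Implicit Arguments. Unset Strict Implicit. Unset Printing Implicit Defensive.
Import GRing.Theory.
Local Open Scope ring_scope.

(* Conventions: indices are 0-based.  An m-ary product is a map
   mu : ('I_m -> V) -> V; the twisting maps alpha_1..alpha_{m-1} are the
   values alpha 0, ..., alpha (m-2) of a family alpha : nat -> {linear V -> V}
   (values at indices >= m-1 are irrelevant). *)
Section HomAlg.
Variables (K : fieldType) (V : lmodType K).

Definition multilinear (m : nat) (mu : ('I_m -> V) -> V) : Prop :=
  forall (x : 'I_m -> V) (i : 'I_m),
    linear (fun v : V => mu (fun k => if k == i then v else x k)).

(* The (2m-1)-argument expression
   (alpha_1(a_1),...,alpha_{j}(a_{j}), (a_{j+1} ... a_{j+m}),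
    alpha_{j+1}(a_{j+m+1}), ..., alpha_{m-1}(a_{2m-1}))
   with the inner product at 0-based position j; a is 0-based. *)
Definition hassoc_expr (m : nat) (mu : ('I_m -> V) -> V)
    (alpha : nat -> {linear V -> V}) (a : nat -> V) (j : nat) : V :=
  mu (fun k : 'I_m =>
        if (k < j)%N then alpha k (a k)
        else if (val k == j) then mu (fun l : 'I_m => a (j + l)%N)
        else alpha k.-1 (a (k + m - 1)%N)).

(* m-ary totally Hom-associative: for every 1-based i in {1,...,m-1}
   (0-based j = i-1), the expression with the inner product at position i
   equals the one with the inner product at position i+1. *)
Definition totally_hom_assoc (m : nat) (mu : ('I_m -> V) -> V)
    (alpha : nat -> {linear V -> V}) : Prop :=
  forall (j : nat), (j < m.-1)%N ->
    forall a : nat -> V, hassoc_expr mu alpha a j = hassoc_expr mu alpha a j.+1.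

Definition hom_multiplicative (m : nat) (mu : ('I_m -> V) -> V)
    (alpha : nat -> {linear V -> V}) : Prop :=
  exists al : {linear V -> V},
    (forall i, (i < m.-1)%N -> alpha i =1 al) /\
    (forall x : 'I_m -> V, al (mu x) = mu (fun k => al (x k))).

Definition reduced_prod (n : nat) (mu : ('I_n -> V) -> V) (a : V)
    (x : 'I_n.-1 -> V) : V :=
  mu (fun k : 'I_n => match insub (val k) : option 'I_n.-1 with
                      | Some k' => x k'
                      | None => a
                      end).
End HomAlg.

From mathcomp Require Import all_boot all_algebra.
From mathcomp Require Import zify.
From Stdlib Require Import FunctionalExtensionality.
Set Implicit Arguments. Unset Strict Implicit. Unset Printing Implicit Defensive.
Import GRing.Theory.
Local Open Scope ring_scope.

(* Each (n-1)-ary associativity expression for (.)' is an n-ary one in which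
   a has been inserted right after the inner block and at the very end; the
   final a absorbs its twist alpha_{n-1} by (1).  After applying the n-ary
   identity, the moved inner block carries a in its second to last slot, and
   (2) pushes it back to the last slot, which is the next (n-1)-ary
   expression. *)

Section ReducedProduct.
Variables (K : fieldType) (V : lmodType K) (n : nat).
Variables (mu : ('I_n -> V) -> V) (a : V).

Lemma eq_mu (x y : 'I_n -> V) : x =1 y -> mu x = mu y.
Proof. by move=> /functional_extensionality ->. Qed.

Definition pad_last (x : 'I_n.-1 -> V) (k : 'I_n) : V :=
  if insub (val k) : option 'I_n.-1 is Some k' then x k' else a.

Lemma reduced_prodE (x : 'I_n.-1 -> V) : reduced_prod mu a x = mu (pad_last x).
Proof. by []. Qed.

Lemma reduced_prod_eq (x : 'I_n.-1 -> V) (y : 'I_n -> V) :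
    (forall k : 'I_n.-1, y (widen_ord (leq_pred n) k) = x k) ->
    (forall k : 'I_n, (n.-1 <= k)%N -> y k = a) ->
  reduced_prod mu a x = mu y.
Proof.
move=> yx ya; apply: eq_mu => k; rewrite /pad_last.
case: insubP => [k' _ kk' | ]; last by rewrite -leqNgt => /ya.
by rewrite -yx; congr y; apply: val_inj.
Qed.

Lemma pad_last_set (x : 'I_n.-1 -> V) (i : 'I_n.-1) (v : V) :
  pad_last (fun k => if k == i then v else x k)
  =1 fun k => if k == widen_ord (leq_pred n) i then v else pad_last x k.
Proof.
move=> k; rewrite /pad_last; case: insubP => [k' _ kk' | ].
  by rewrite -[k == _]val_eqE /= -kk' val_eqE.
by case: eqP => // -> /=; rewrite ltn_ord.
Qed.

Lemma reduced_prod_multilinear :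
  multilinear mu -> multilinear (reduced_prod mu a).
Proof.
move=> mu_lin x i.
have -> : (fun v => reduced_prod mu a (fun k => if k == i then v else x k))
    = fun v => mu (fun k => if k == widen_ord (leq_pred n) i then v
                            else pad_last x k).
  by apply: functional_extensionality => v; apply: eq_mu; apply: pad_last_set.
exact: mu_lin.
Qed.

Definition insert_at (i : nat) (v : V) (s : nat -> V) (k : nat) : V :=
  if (k < i)%N then s k else if k == i then v else s k.-1.

Definition insert_units (j : nat) (s : nat -> V) : nat -> V :=
  insert_at (n.-1).*2 a (insert_at (j + n.-1) a s).

Lemma insert_units_lt j s k : (j < n.-1)%N -> (k < j + n.-1)%N ->
  insert_units j s k = s k.
Proof. by move=> jn kj; rewrite /insert_units /insert_at !ifT //; lia. Qed.

Lemma insert_units_block j s : (j < n.-1)%N -> insert_units j s (j + n.-1) = a.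
Proof. by move=> jn; rewrite /insert_units /insert_at ifT ?ltnn ?eqxx //; lia. Qed.

Lemma insert_units_gt j s k : (j + n.-1 < k < (n.-1).*2)%N ->
  insert_units j s k = s k.-1.
Proof.
by move=> kj; rewrite /insert_units /insert_at ifT 1?ifF ?ifF //; lia.
Qed.

Lemma insert_units_last j s : insert_units j s (n.-1).*2 = a.
Proof. by rewrite /insert_units /insert_at ltnn eqxx. Qed.

End ReducedProduct.

Section ReducedAssociativity.
Variables (K : fieldType) (V : lmodType K) (n : nat).
Variables (mu : ('I_n -> V) -> V) (alpha : nat -> {linear V -> V}) (a : V).
Hypothesis alpha_a : alpha (n - 2)%N a = a.
Hypothesis a_swap : forall x : nat -> V,
  mu (fun k : 'I_n => if (k < n - 1)%N then x (val k) else a)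
  = mu (fun k : 'I_n => if (k < n - 2)%N then x (val k)
                        else if (val k == n - 2)%N then a
                        else x (n - 2)%N).

Lemma twisted_insert_units_last j s (k : 'I_n) : (n.-1 <= k)%N ->
  alpha k.-1 (insert_units n a j s (k + n - 1)) = a.
Proof.
move=> kn; have kn' := ltn_ord k.
have -> : k.-1 = (n - 2)%N by lia.
have -> : (k + n - 1 = (n.-1).*2)%N by lia.
by rewrite insert_units_last alpha_a.
Qed.

Lemma hassoc_expr_insert_units (s : nat -> V) (j : nat) : (j < n.-1)%N ->
  hassoc_expr (reduced_prod mu a) alpha s j
  = hassoc_expr mu alpha (insert_units n a j s) j.
Proof.
move=> jn; apply: reduced_prod_eq => [k | k kn] /=; last first.
  have kn' := ltn_ord k.
  by rewrite !ifF; [exact: twisted_insert_units_last | lia | lia].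
have kn := ltn_ord k.
case: ltnP => kj; first by rewrite insert_units_lt //; lia.
case: eqP => [_ | kj'].
  symmetry; apply: reduced_prod_eq => [l | l ln] /=.
    by rewrite insert_units_lt // ltn_add2l.
  have -> : (j + l = j + n.-1)%N by have := ltn_ord l; lia.
  exact: insert_units_block.
rewrite insert_units_gt; last lia.
by congr (alpha _ (s _)); lia.
Qed.

Lemma reduced_prod_shifted_block (s : nat -> V) (j : nat) : (j.+1 < n.-1)%N ->
  reduced_prod mu a (fun l : 'I_n.-1 => s (j.+1 + l)%N)
  = mu (fun l => insert_units n a j s (j.+1 + l)).
Proof.
move=> jn.
transitivity (mu (fun k => if (k < n - 1)%N then s (j.+1 + k)%N else a)).
  apply: reduced_prod_eq => [k | k kn] /=; last by rewrite ifF //; lia.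
  by rewrite ifT //; have := ltn_ord k; lia.
rewrite (a_swap (fun l => s (j.+1 + l)%N)); apply: eq_mu => l.
have ln := ltn_ord l.
case: ltnP => lj; first by rewrite insert_units_lt //; lia.
case: eqP => /= lj'.
  have -> : (j.+1 + l = j + n.-1)%N by lia.
  by rewrite insert_units_block //; lia.
by rewrite insert_units_gt; [congr s | ]; lia.
Qed.

Lemma hassoc_expr_insert_units_next (s : nat -> V) (j : nat) : (j.+1 < n.-1)%N ->
  hassoc_expr mu alpha (insert_units n a j s) j.+1
  = hassoc_expr (reduced_prod mu a) alpha s j.+1.
Proof.
move=> jn; symmetry; apply: reduced_prod_eq => [k | k kn] /=; last first.
  have kn' := ltn_ord k.
  by rewrite !ifF; [exact: twisted_insert_units_last | lia | lia].
have kn := ltn_ord k.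
case: ltnP => kj; first by rewrite insert_units_lt //; lia.
case: eqP => [_ | kj']; first by rewrite reduced_prod_shifted_block.
by rewrite insert_units_gt; [congr (alpha _ (s _)) | ]; lia.
Qed.

Lemma reduced_prod_totally_hom_assoc :
  totally_hom_assoc mu alpha -> totally_hom_assoc (reduced_prod mu a) alpha.
Proof.
move=> mu_assoc j jn s.
rewrite hassoc_expr_insert_units; last lia.
by rewrite mu_assoc ?hassoc_expr_insert_units_next //; lia.
Qed.

Lemma reduced_prod_hom_multiplicative : (1 < n)%N ->
  hom_multiplicative mu alpha -> hom_multiplicative (reduced_prod mu a) alpha.
Proof.
move=> n_gt1 [al [alpha_al al_mu]]; exists al; split=> [i i_lt | x].
  by apply: alpha_al; lia.
rewrite !reduced_prodE al_mu; apply: eq_mu => k; rewrite /pad_last.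
case: insubP => // _.
by rewrite -(alpha_al (n - 2)%N) ?alpha_a //; lia.
Qed.

End ReducedAssociativity.

Theorem theorem3p4 (K : fieldType) (hK : [pchar K] =i pred0)
    (A : lmodType K) (n : nat) (hn : (3 <= n)%N)
    (mu : ('I_n -> A) -> A) (alpha : nat -> {linear A -> A})
    (hmu : multilinear mu) (hassoc : totally_hom_assoc mu alpha)
    (a : A)
    (h1 : alpha (n - 2)%N a = a)
    (h2 : forall x : nat -> A,
        mu (fun k : 'I_n => if (k < n - 1)%N then x (val k) else a)
        = mu (fun k : 'I_n => if (k < n - 2)%N then x (val k)
                              else if (val k == n - 2)%N then a
                              else x (n - 2)%N)) :
  multilinear (reduced_prod mu a) /\
  totally_hom_assoc (reduced_prod mu a) alpha /\
  (hom_multiplicative mu alpha -> hom_multiplicative (reduced_prod mu a) alpha).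
Proof.
split; first exact: reduced_prod_multilinear.
split; first exact: reduced_prod_totally_hom_assoc.
by apply: reduced_prod_hom_multiplicative => //; apply: leq_trans _ hn.
Qed.
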